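(* Let $n\ge2$ and $1/n\le t\le 1/(n-1)$. Then $P(t)=E_t$.
   Context: $E_t=\{\mathbf{p}\in\mathbb{R}^n:\mathbf{p}\cdot\mathbf{p}\le t,\ \sum_i\mathbf{p}_i=1\}$ and $P(t)=\{\mathbf{p}\in\mathbb{R}^n:\mathbf{p}\ge0,\ \sum_i\mathbf{p}_i=1,\ \mathbf{p}\cdot\mathbf{p}\le t\}$. *)

From mathcomp Require Import all_boot all_order all_algebra.
From mathcomp Require Import classical_sets.
Set Implicit Arguments. Unset Strict Implicit. Unset Printing Implicit Defensive.
Import Order.TTheory GRing.Theory Num.Theory.
Local Open Scope ring_scope.
Local Open Scope classical_set_scope.

Definition dotv (R : pzRingType) (n : nat) (p q : 'rV[R]_n) : R :=
  \sum_(i < n) p 0 i * q 0 i.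

Definition E_set (R : realFieldType) (n : nat) (t : R) : set 'rV[R]_n :=
  [set p : 'rV[R]_n | dotv p p <= t /\ \sum_(i < n) p 0 i = 1].

Definition P_set (R : realFieldType) (n : nat) (t : R) : set 'rV[R]_n :=
  [set p : 'rV[R]_n | (forall i, 0 <= p 0 i) /\ \sum_(i < n) p 0 i = 1 /\ dotv p p <= t].

(* If a point of the hyperplane sum_i p_i = 1 had a coordinate x = p_j < 0,
   the Cauchy-Schwarz inequality on the other n - 1 coordinates, whose sum is
   1 - x, would give (n - 1) p.p >= (n - 1) x^2 + (1 - x)^2 = 1 - 2x + n x^2 > 1,
   so p.p > 1/(n - 1) >= t.  Hence the condition p.p <= t already forces p >= 0. *)
From mathcomp Require Import all_boot all_order all_algebra.
From mathcomp Require Import classical_sets.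
From mathcomp Require Import ring lra.
Set Implicit Arguments. Unset Strict Implicit. Unset Printing Implicit Defensive.
Import Order.TTheory GRing.Theory Num.Theory.
Local Open Scope ring_scope.

Lemma sqr_sum_le_card_sum_sqr (R : realDomainType) (I : finType) (A : {pred I})
    (x : I -> R) :
  (\sum_(i in A) x i) ^+ 2 <= #|A|%:R * \sum_(i in A) x i ^+ 2.
Proof.
set S := \sum_(i in A) x i; set Q := \sum_(i in A) x i ^+ 2.
have pair_sum_ge0 : 0 <= \sum_(i in A) \sum_(j in A) (x i - x j) ^+ 2.
  by do 2![apply: sumr_ge0 => ? _]; apply: sqr_ge0.
have pair_sumE : \sum_(i in A) \sum_(j in A) (x i - x j) ^+ 2
               = (#|A|%:R * Q - S ^+ 2) *+ 2.
  have inner i :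
      \sum_(j in A) (x i - x j) ^+ 2 = #|A|%:R * x i ^+ 2 - x i * S *+ 2 + Q.
    rewrite (eq_bigr (fun j => x i ^+ 2 - x i * x j *+ 2 + x j ^+ 2)) => [|j _];
      last exact: sqrrB.
    by rewrite !big_split /= sumr_const sumrN sumrMnl -mulr_sumr mulr_natl.
  rewrite (eq_bigr _ (fun i _ => inner i)) !big_split /= sumrN sumrMnl.
  rewrite -mulr_sumr -mulr_suml sumr_const.
  rewrite -/S -/Q mulr_natl; ring.
rewrite -subr_ge0; move: pair_sum_ge0; rewrite pair_sumE; lra.
Qed.

Lemma dotv_ge_coord (R : realFieldType) (n : nat) (p : 'rV[R]_n) (j : 'I_n) :
  (\sum_(i < n) p 0 i - p 0 j) ^+ 2 + (n.-1)%:R * p 0 j ^+ 2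
    <= (n.-1)%:R * dotv p p.
Proof.
have sumE (f : 'I_n -> R) : \sum_(i < n) f i = f j + \sum_(i in predC1 j) f i.
  by rewrite (bigD1 j).
have := sqr_sum_le_card_sum_sqr (predC1 j) (p 0).
have -> : dotv p p = \sum_(i < n) p 0 i ^+ 2 by apply: eq_bigr => i _; rewrite expr2.
rewrite cardC1 card_ord !sumE addrAC subrr add0r; lra.
Qed.

Lemma row_ge0_of_dotv_le (R : realFieldType) (n : nat) (p : 'rV[R]_n) :
  \sum_(i < n) p 0 i = 1 -> (n.-1)%:R * dotv p p <= 1 -> forall i, 0 <= p 0 i.
Proof.
move=> sum1 dot_le j; have := dotv_ge_coord p j; rewrite sum1.
have m_ge0 : 0 <= (n.-1)%:R :> R by [].
set x := p 0 j; set m := (n.-1)%:R => bound.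
have : (m + 1) * x ^+ 2 <= x *+ 2 by lra.
have : 0 <= (m + 1) * x ^+ 2 by rewrite mulr_ge0 ?sqr_ge0 ?addr_ge0.
lra.
Qed.

Theorem lemma4 (R : realFieldType) (n : nat) (t : R) :
  (2 <= n)%N -> n%:R^-1 <= t -> t <= (n.-1)%:R^-1 ->
  @P_set R n t = @E_set R n t.
Proof.
(* The lower bound 1/n <= t only makes both sets nonempty. *)
move=> n_ge2 _ t_le; apply/seteqP; split => p /=; first by case=> _ [].
case=> dot_le sum1; split=> //; apply: row_ge0_of_dotv_le => //.
have m_gt0 : 0 < (n.-1)%:R :> R by rewrite ltr0n -ltnS prednK // ltnW.
by rewrite -ler_pdivlMl // mulr1 (le_trans dot_le).
Qed.
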